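(* Let $\mathbb F\subseteq\mathbb R$ be a subfield and $X\subseteq\mathbb F^n$ such that $\operatorname{conv}_{\mathbb R}(X\cup\{0\})$ is a polyhedron. Then a nonempty subset $Y\subseteq X$ is a positive weak $\mathbb F$-face of $X$ if and only if there is a linear functional $\varphi\in(\mathbb R^n)^*$ which attains a maximum $M>0$ on $X$ with $Y=\{x\in X:\varphi(x)=M\}$. In particular, if $0$ lies in the relative interior of $\operatorname{conv}_{\mathbb R}(X)$, then a subset $Y\subseteq X$ is a positive weak $\mathbb F$-face of $X$ if and only if $Y\ne X$ and $Y$ is a weak $\mathbb F$-face of $X$.
   Context: $\operatorname{conv}_{\mathbb K}(X)$ ($\mathbb K=\mathbb F$ or $\mathbb R$) is the set of finite combinations $\sum r_sx_s$ with $x_s\in X$, $r_s\in\mathbb K\cap[0,\infty)$, $\sum r_s=1$; for $Y=\operatorname{conv}_{\mathbb K}(X)$, $\operatorname{relint}_{\mathbb K}(Y)=\{x\in Y:\forall y\in Y\ \exists z\in Y,\ t\in\mathbb K\cap(0,1),\ x=ty+(1-t)z\}$ (for $\mathbb K=\mathbb R$ and a polyhedron this is the usual relative interior). $Y\subseteq X$ is a weak $\mathbb F$-face of $X$ if for every $U\subseteq X$, $\operatorname{conv}_{\mathbb F}(Y)\cap\operatorname{relint}_{\mathbb F}(\operatorname{conv}_{\mathbb F}(U))\ne\emptyset$ implies $U\subseteq Y$; a weak $\mathbb F$-face $Y$ is a positive weak $\mathbb F$-face if for every $U\subseteq X$, $\operatorname{conv}_{\mathbb F}(Y)\cap\operatorname{relint}_{\mathbb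 F}(\operatorname{conv}_{\mathbb F}(U\cup\{0\}))=\emptyset$. A polyhedron is a finite intersection of closed affine half-spaces. *)

From Stdlib Require Fin.
From Stdlib Require Import Reals List.
Import ListNotations.
Open Scope R_scope.

Definition vec (n : nat) := Fin.t n -> R.

Definition vzero {n} : vec n := fun _ => 0.
Definition vadd {n} (x y : vec n) : vec n := fun i => x i + y i.
Definition vscale {n} (c : R) (x : vec n) : vec n := fun i => c * x i.

Definition is_subfield (F : R -> Prop) : Prop :=
  F 0 /\ F 1 /\
  (forall a b, F a -> F b -> F (a + b)) /\
  (forall a, F a -> F (- a)) /\
  (forall a b, F a -> F b -> F (a * b)) /\
  (forall a, F a -> a <> 0 -> F (/ a)).

Definition lincomb {n} (l : list (R * vec n)) : vec n :=
  fold_right (fun p acc => vadd (vscale (fst p) (snd p)) acc) vzero l.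
Definition coefsum {n} (l : list (R * vec n)) : R :=
  fold_right (fun p acc => fst p + acc) 0 l.

Definition conv {n} (K : R -> Prop) (X : vec n -> Prop) (v : vec n) : Prop :=
  exists l : list (R * vec n),
    Forall (fun p => X (snd p) /\ K (fst p) /\ 0 <= fst p) l /\
    coefsum l = 1 /\ v = lincomb l.

Definition relint {n} (K : R -> Prop) (Y : vec n -> Prop) (x : vec n) : Prop :=
  Y x /\
  forall y, Y y -> exists z t, Y z /\ K t /\ 0 < t /\ t < 1 /\
    x = vadd (vscale t y) (vscale (1 - t) z).

Definition allR : R -> Prop := fun _ => True.

Definition subset {n} (A B : vec n -> Prop) : Prop := forall x, A x -> B x.

Definition weak_face {n} (F : R -> Prop) (X Y : vec n -> Prop) : Prop :=
  subset Y X /\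
  forall U : vec n -> Prop, subset U X ->
    (exists v, conv F Y v /\ relint F (conv F U) v) -> subset U Y.

Definition pos_weak_face {n} (F : R -> Prop) (X Y : vec n -> Prop) : Prop :=
  weak_face F X Y /\
  forall U : vec n -> Prop, subset U X ->
    ~ (exists v, conv F Y v /\
         relint F (conv F (fun x => U x \/ x = vzero)) v).

Definition linear_functional {n} (phi : vec n -> R) : Prop :=
  (forall x y, phi (vadd x y) = phi x + phi y) /\
  (forall c x, phi (vscale c x) = c * phi x).

Definition polyhedron {n} (P : vec n -> Prop) : Prop :=
  exists hs : list ((vec n -> R) * R),
    (forall h, In h hs -> linear_functional (fst h)) /\
    forall x, P x <-> (forall h, In h hs -> fst h x <= snd h).

From Stdlib Require Import Reals List Lra Lia Psatz Classical ClassicalEpsilon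
  FunctionalExtensionality PropExtensionality.
Import ListNotations.
Open Scope R_scope.

(* The easy direction is a computation with the functional.  Conversely, write
   conv_R(X ∪ {0}) as {x | a_i x <= b_i} and let phi, M be the sums of the a_i, b_i over the
   inequalities that are tight on all of Y, so that phi <= M on X with equality on Y.  Pick c in
   conv_F(Y) strict in every other inequality.  If x ∈ X ∪ {0} has phi x = M, it lies on all the
   tight hyperplanes, so a small step from c away from x stays in the polyhedron and c becomes a
   real convex combination of points of X ∪ {0} in which x has positive weight.  As c and the
   points have coordinates in F and F is dense in R, the weights can be moved into F; then c lies
   in the F-relative interior of the F-hull of finitely many of these points, x among them.
   Positivity excludes 0 from them and the weak face property puts x in Y; for x = 0 this shows
   M > 0.  When 0 is in the relative interior of conv_R(X), phi 0 = M rules out Y = X, and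
   writing 0 as a combination in which a given point of X has positive weight makes every
   proper weak face positive. *)

Fixpoint rsum (k : nat) (f : nat -> R) : R :=
  match k with O => 0 | S k => rsum k f + f k end.

Lemma rsum_ext k f g : (forall j, (j < k)%nat -> f j = g j) -> rsum k f = rsum k g.
Proof.
  induction k as [|k IH]; simpl; intros H; [reflexivity|].
  rewrite IH, H; [reflexivity | lia | intros; apply H; lia].
Qed.

Lemma rsum_add k f g : rsum k (fun j => f j + g j) = rsum k f + rsum k g.
Proof. induction k; simpl; [ring | rewrite IHk; ring]. Qed.

Lemma rsum_scal k c f : rsum k (fun j => c * f j) = c * rsum k f.
Proof. induction k; simpl; [ring | rewrite IHk; ring]. Qed.

Lemma rsum_zero k : rsum k (fun _ => 0) = 0.
Proof. induction k; simpl; [reflexivity | rewrite IHk; ring]. Qed.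

Lemma rsum_le k f g : (forall j, (j < k)%nat -> f j <= g j) -> rsum k f <= rsum k g.
Proof.
  induction k as [|k IH]; simpl; intros H; [lra|].
  assert (rsum k f <= rsum k g) by (apply IH; intros; apply H; lia).
  assert (f k <= g k) by (apply H; lia). lra.
Qed.

Lemma rsum_nonneg k f : (forall j, (j < k)%nat -> 0 <= f j) -> 0 <= rsum k f.
Proof.
  intros H. rewrite <- (rsum_zero k). apply rsum_le; auto.
Qed.

Lemma rsum_abs k f : Rabs (rsum k f) <= rsum k (fun j => Rabs (f j)).
Proof.
  induction k; simpl; [rewrite Rabs_R0; lra|].
  eapply Rle_trans; [apply Rabs_triang | lra].
Qed.

Lemma rsum_succ_l k f : rsum (S k) f = f O + rsum k (fun j => f (S j)).
Proof. induction k; simpl in *; [ring | rewrite IHk; ring]. Qed.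

Lemma rsum_term_le k f j0 :
  (forall j, (j < k)%nat -> 0 <= f j) -> (j0 < k)%nat -> f j0 <= rsum k f.
Proof.
  induction k as [|k IH]; intros H Hj0; [lia|]. simpl.
  assert (0 <= f k) by (apply H; lia).
  destruct (Nat.eq_dec j0 k) as [->|Hne].
  - assert (0 <= rsum k f) by (apply rsum_nonneg; intros; apply H; lia). lra.
  - assert (f j0 <= rsum k f) by (apply IH; [intros; apply H|]; lia). lra.
Qed.

Lemma rsum_delta k j0 b :
  (j0 < k)%nat -> rsum k (fun j => if Nat.eqb j j0 then b else 0) = b.
Proof.
  induction k as [|k IH]; intros Hj0; [lia|]. simpl.
  destruct (Nat.eq_dec j0 k) as [->|Hne].
  - rewrite Nat.eqb_refl, (rsum_ext k _ (fun _ => 0 * b)), rsum_scal; [ring|].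
    intros j Hj. destruct (Nat.eqb_spec j k); [lia | ring].
  - rewrite IH by lia. destruct (Nat.eqb_spec k j0); [lia | ring].
Qed.

Lemma rsum_set_last k g x v :
  rsum k (fun j => g j * (if Nat.eqb j k then v else x j)) = rsum k (fun j => g j * x j).
Proof. apply rsum_ext. intros j Hj. destruct (Nat.eqb_spec j k); [lia | reflexivity]. Qed.

Lemma rsum_weighted_abs_le k w d delta :
  (forall j, (j < k)%nat -> Rabs (d j) <= delta) ->
  Rabs (rsum k (fun j => w j * d j)) <= delta * rsum k (fun j => Rabs (w j)).
Proof.
  intros H. eapply Rle_trans; [apply rsum_abs|].
  rewrite <- rsum_scal. apply rsum_le. intros j Hj.
  rewrite Rabs_mult, Rmult_comm. apply Rmult_le_compat_r; [apply Rabs_pos | auto].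
Qed.

Section Subfield.

Variable F : R -> Prop.
Hypothesis HF : is_subfield F.

Lemma subfield_0 : F 0.
Proof. apply HF. Qed.
Lemma subfield_1 : F 1.
Proof. apply HF. Qed.
Lemma subfield_add a b : F a -> F b -> F (a + b).
Proof. apply HF. Qed.
Lemma subfield_opp a : F a -> F (- a).
Proof. apply HF. Qed.
Lemma subfield_mul a b : F a -> F b -> F (a * b).
Proof. apply HF. Qed.
Lemma subfield_inv a : F a -> a <> 0 -> F (/ a).
Proof. apply HF. Qed.

Lemma subfield_sub a b : F a -> F b -> F (a - b).
Proof. intros. apply subfield_add, subfield_opp; auto. Qed.

Lemma subfield_div a b : F a -> F b -> b <> 0 -> F (a / b).
Proof. intros. apply subfield_mul, subfield_inv; auto. Qed.

Lemma subfield_INR m : F (INR m).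
Proof.
  induction m; [apply subfield_0|].
  rewrite S_INR. apply subfield_add; auto using subfield_1.
Qed.

Lemma subfield_IZR z : F (IZR z).
Proof.
  destruct z as [|p|p]; [apply subfield_0| |rewrite IZR_NEG; apply subfield_opp];
    change (IZR (Z.pos p)) with (IPR p);
    rewrite <- INR_IPR; apply subfield_INR.
Qed.

Lemma subfield_rsum k f : (forall j, (j < k)%nat -> F (f j)) -> F (rsum k f).
Proof.
  induction k; simpl; intros Hf; [apply subfield_0|].
  apply subfield_add; auto.
Qed.

Lemma subfield_dense x eps : 0 < eps -> exists q, F q /\ Rabs (q - x) < eps.
Proof.
  intros Heps. destruct (archimed_cor1 eps Heps) as [N [HN HN0]].
  assert (HNpos : 0 < INR N) by (apply lt_0_INR; lia).
  destruct (archimed (x * INR N)) as [Hup1 Hup2].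
  exists (IZR (up (x * INR N)) / INR N). split.
  - apply subfield_div; [apply subfield_IZR | apply subfield_INR | lra].
  - assert (E : IZR (up (x * INR N)) / INR N - x = (IZR (up (x * INR N)) - x * INR N) / INR N)
      by (field; lra).
    rewrite E, Rabs_right.
    + apply Rle_lt_trans with (1 / INR N); [|lra].
      apply Rmult_le_compat_r; [left; apply Rinv_0_lt_compat |]; lra.
    + apply Rle_ge, Rmult_le_pos; [lra | left; apply Rinv_0_lt_compat; lra].
Qed.

End Subfield.

Ltac subfield_closure HF :=
  repeat match goal with
  | |- _ (_ - _) => apply (subfield_sub _ HF)
  | |- _ (_ + _) => apply (subfield_add _ HF)
  | |- _ (_ * _) => apply (subfield_mul _ HF)
  | |- _ (_ / _) => apply (subfield_div _ HF)
  | |- _ (/ _) => apply (subfield_inv _ HF)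
  | |- _ (- _) => apply (subfield_opp _ HF)
  | |- _ 0 => apply (subfield_0 _ HF)
  | |- _ 1 => apply (subfield_1 _ HF)
  | |- _ (IZR _) => apply (subfield_IZR _ HF)
  end; auto.

Section Elimination.

Variables (E : Type) (a : E -> nat -> R) (b : E -> R) (k : nat) (e0 : E).
Hypothesis pivot_nonzero : a e0 k <> 0.

Definition elim_coef (e : E) (j : nat) : R := a e j - a e k * a e0 j / a e0 k.
Definition elim_rhs (e : E) : R := b e - a e k * b e0 / a e0 k.
Definition pivot_solve (x : nat -> R) : R := (b e0 - rsum k (fun j => a e0 j * x j)) / a e0 k.

Lemma pivot_value (x : nat -> R) :
  rsum (S k) (fun j => a e0 j * x j) = b e0 -> x k = pivot_solve x.
Proof. unfold pivot_solve. simpl. intros H. field_simplify_eq; [lra | exact pivot_nonzero]. Qed.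

Lemma pivot_solve_eq (x : nat -> R) :
  rsum (S k) (fun j => a e0 j * (if Nat.eqb j k then pivot_solve x else x j)) = b e0.
Proof.
  simpl. rewrite rsum_set_last, Nat.eqb_refl. unfold pivot_solve. field. exact pivot_nonzero.
Qed.

Lemma pivot_solve_close (lam mu : nat -> R) eps :
  rsum (S k) (fun j => a e0 j * lam j) = b e0 -> 0 < eps ->
  (forall j, (j < k)%nat ->
     Rabs (mu j - lam j) < eps / (1 + rsum k (fun j => Rabs (a e0 j / a e0 k)))) ->
  Rabs (pivot_solve mu - lam k) < eps.
Proof.
  intros Hlam Heps Hmu. set (C := rsum k (fun j => Rabs (a e0 j / a e0 k))) in *.
  assert (HC : 0 <= C) by (apply rsum_nonneg; intros; apply Rabs_pos).
  assert (Herr : pivot_solve mu - lam k = rsum k (fun j => a e0 j / a e0 k * (lam j - mu j))).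
  { rewrite (pivot_value lam Hlam). unfold pivot_solve.
    rewrite (rsum_ext k (fun j => a e0 j / a e0 k * (lam j - mu j))
                        (fun j => / a e0 k * (a e0 j * lam j) + (- / a e0 k) * (a e0 j * mu j)))
      by (intros; field; exact pivot_nonzero).
    rewrite rsum_add, !rsum_scal. field. exact pivot_nonzero. }
  rewrite Herr. apply Rle_lt_trans with (eps / (1 + C) * C).
  - apply rsum_weighted_abs_le. intros j Hj. rewrite Rabs_minus_sym. left. auto.
  - apply Rmult_lt_reg_r with (1 + C); [lra|].
    replace (eps / (1 + C) * C * (1 + C)) with (eps * C) by (field; lra). nra.
Qed.

Lemma elim_pivot_equiv (x : nat -> R) (e : E) :
  rsum (S k) (fun j => a e0 j * x j) = b e0 ->
  (rsum (S k) (fun j => a e j * x j) = b e <->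
   rsum k (fun j => elim_coef e j * x j) = elim_rhs e).
Proof.
  intros H0.
  assert (Hred : rsum k (fun j => elim_coef e j * x j)
                 = rsum (S k) (fun j => a e j * x j) - a e k * b e0 / a e0 k).
  { unfold elim_coef.
    rewrite (rsum_ext k _ (fun j => a e j * x j + (- (a e k / a e0 k)) * (a e0 j * x j)))
      by (intros; field; exact pivot_nonzero).
    rewrite rsum_add, rsum_scal. simpl in *.
    replace (rsum k (fun j => a e0 j * x j)) with (b e0 - a e0 k * x k) by lra.
    field; exact pivot_nonzero. }
  rewrite Hred. unfold elim_rhs. lra.
Qed.

End Elimination.

(* Induction on the number of unknowns: eliminate the last one with an equation in which it
   occurs, or approximate it freely if it occurs in none. *)
Lemma subfield_solutions_dense F (HF : is_subfield F) k :
  forall (E : Type) (a : E -> nat -> R) (b : E -> R) (lam : nat -> R),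
  (forall e j, F (a e j)) -> (forall e, F (b e)) ->
  (forall e, rsum k (fun j => a e j * lam j) = b e) ->
  forall eps, 0 < eps ->
  exists mu : nat -> R,
    (forall j, (j < k)%nat -> F (mu j) /\ Rabs (mu j - lam j) < eps) /\
    (forall e, rsum k (fun j => a e j * mu j) = b e).
Proof.
  induction k as [|k IH]; intros E a b lam Ha Hb Hlam eps Heps.
  { exists lam. split; [intros; lia | exact Hlam]. }
  destruct (classic (exists e0, a e0 k <> 0)) as [[e0 Hpiv]|Hnopiv].
  - set (C := rsum k (fun j => Rabs (a e0 j / a e0 k))).
    assert (HC : 0 <= C) by (apply rsum_nonneg; intros; apply Rabs_pos).
    destruct (IH E (elim_coef _ a k e0) (elim_rhs _ a b k e0) lam) with (eps := eps / (1 + C))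
      as [mu0 [Hmu0 Hmu0eq]].
    + intros e j. unfold elim_coef. subfield_closure HF.
    + intros e. unfold elim_rhs. subfield_closure HF.
    + intros e. apply (elim_pivot_equiv _ a b k e0 Hpiv); auto.
    + apply Rdiv_lt_0_compat; lra.
    + assert (Heps' : eps / (1 + C) <= eps).
      { apply Rmult_le_reg_r with (1 + C); [lra|].
        unfold Rdiv. rewrite Rmult_assoc, Rinv_l by lra. nra. }
      exists (fun j => if Nat.eqb j k then pivot_solve _ a b k e0 mu0 else mu0 j). split.
      * intros j Hj. destruct (Nat.eqb_spec j k) as [->|Hne].
        -- split.
           ++ unfold pivot_solve. subfield_closure HF.
              apply (subfield_rsum F HF). intros j Hj'. subfield_closure HF. apply Hmu0; lia.
           ++ apply (pivot_solve_close _ a b k e0 Hpiv); auto. intros j Hj'. apply Hmu0. lia.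
        -- destruct (Hmu0 j ltac:(lia)). split; [auto | lra].
      * intros e. apply (elim_pivot_equiv _ a b k e0 Hpiv _ e (pivot_solve_eq _ a b k e0 Hpiv mu0)).
        rewrite rsum_set_last. apply Hmu0eq.
  - assert (Hzero : forall e, a e k = 0).
    { intros e. apply NNPP. intros Hne. apply Hnopiv. exists e. exact Hne. }
    destruct (IH E a b lam Ha Hb) with (eps := eps) as [mu0 [Hmu0 Hmu0eq]]; auto.
    { intros e. rewrite <- (Hlam e). simpl. rewrite Hzero. ring. }
    destruct (subfield_dense F HF (lam k) eps Heps) as [q [Hq Hqlam]].
    exists (fun j => if Nat.eqb j k then q else mu0 j). split.
    + intros j Hj. destruct (Nat.eqb_spec j k) as [->|Hne]; auto. apply Hmu0. lia.
    + intros e. simpl. rewrite Hzero, rsum_set_last, <- (Hmu0eq e). ring.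
Qed.

Lemma vext {n} (x y : vec n) : (forall i, x i = y i) -> x = y.
Proof. apply functional_extensionality. Qed.

Lemma set_ext {n} (S1 S2 : vec n -> Prop) : (forall p, S1 p <-> S2 p) -> S1 = S2.
Proof.
  intros H. apply functional_extensionality. intros p. apply propositional_extensionality, H.
Qed.

Definition coords_in {n} (F : R -> Prop) (v : vec n) : Prop := forall i, F (v i).

Definition nonneg_comb {n} (S : vec n -> Prop) (L : list (R * vec n)) : Prop :=
  Forall (fun q => S (snd q) /\ 0 <= fst q) L.

Definition wzero {n} : R * vec n := (0, vzero).

Lemma fold_right_rsum {A} (g : A -> R) (L : list A) d :
  fold_right (fun p acc => g p + acc) 0 L = rsum (length L) (fun j => g (nth j L d)).
Proof.
  induction L as [|p L IH]; [reflexivity|].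
  cbn [length fold_right]. rewrite rsum_succ_l, IH. reflexivity.
Qed.

Lemma lincomb_coord {n} (L : list (R * vec n)) i :
  lincomb L i = fold_right (fun p acc => fst p * snd p i + acc) 0 L.
Proof.
  induction L as [|p L IH]; simpl; [reflexivity|].
  unfold vadd, vscale. rewrite <- IH. reflexivity.
Qed.

Lemma coefsum_rsum {n} (L : list (R * vec n)) :
  coefsum L = rsum (length L) (fun j => fst (nth j L wzero)).
Proof. apply (fold_right_rsum (fun p => fst p)). Qed.

Lemma lincomb_rsum {n} (L : list (R * vec n)) i :
  lincomb L i = rsum (length L) (fun j => fst (nth j L wzero) * snd (nth j L wzero) i).
Proof. rewrite lincomb_coord. apply (fold_right_rsum (fun p => fst p * snd p i)). Qed.

Lemma Forall_nth_wzero {n} (P : R * vec n -> Prop) L :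
  (forall j, (j < length L)%nat -> P (nth j L wzero)) -> Forall P L.
Proof. intros H. apply Forall_nth. intros j d Hj. rewrite (nth_indep L d wzero Hj). auto. Qed.

Lemma nth_wzero_Forall {n} (P : R * vec n -> Prop) L j :
  Forall P L -> (j < length L)%nat -> P (nth j L wzero).
Proof. intros H Hj. apply Forall_nth; auto. Qed.

Fixpoint reweight {n} (mu : nat -> R) (L : list (R * vec n)) : list (R * vec n) :=
  match L with
  | [] => []
  | p :: L' => (mu O, snd p) :: reweight (fun j => mu (S j)) L'
  end.

Lemma reweight_length {n} mu (L : list (R * vec n)) : length (reweight mu L) = length L.
Proof. revert mu; induction L; simpl; auto. Qed.

Lemma reweight_nth {n} mu (L : list (R * vec n)) j :
  (j < length L)%nat -> nth j (reweight mu L) wzero = (mu j, snd (nth j L wzero)).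
Proof.
  revert mu j; induction L as [|p L IH]; simpl; intros mu j Hj; [lia|].
  destruct j; [reflexivity | apply (IH (fun j => mu (S j))); lia].
Qed.

Lemma reweight_points {n} mu (L : list (R * vec n)) : map snd (reweight mu L) = map snd L.
Proof. revert mu; induction L; simpl; intros; f_equal; auto. Qed.

Definition scale_weights {n} (a : R) (L : list (R * vec n)) : list (R * vec n) :=
  map (fun p => (a * fst p, snd p)) L.

Lemma coefsum_scale {n} a (L : list (R * vec n)) : coefsum (scale_weights a L) = a * coefsum L.
Proof. induction L; simpl; [ring|]. unfold coefsum in *. simpl. rewrite IHL. ring. Qed.

Lemma lincomb_scale {n} a (L : list (R * vec n)) :
  lincomb (scale_weights a L) = vscale a (lincomb L).
Proof.
  induction L as [|p L IH]; apply vext; intros i.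
  - simpl. unfold vscale, vzero. ring.
  - change (lincomb (scale_weights a (p :: L)))
      with (vadd (vscale (a * fst p) (snd p)) (lincomb (scale_weights a L))).
    rewrite IH. unfold lincomb. simpl. unfold vadd, vscale. ring.
Qed.

Lemma coefsum_app {n} (L1 L2 : list (R * vec n)) : coefsum (L1 ++ L2) = coefsum L1 + coefsum L2.
Proof. induction L1; simpl; [ring|]. unfold coefsum in *. simpl. rewrite IHL1. ring. Qed.

Lemma lincomb_app {n} (L1 L2 : list (R * vec n)) :
  lincomb (L1 ++ L2) = vadd (lincomb L1) (lincomb L2).
Proof.
  apply vext; intros i. unfold vadd. rewrite !lincomb_coord.
  induction L1; simpl; [ring | rewrite IHL1; ring].
Qed.

Lemma coefsum_single {n} a (y : vec n) : coefsum [(a, y)] = a.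
Proof. unfold coefsum. simpl. ring. Qed.

Lemma lincomb_single {n} a (y : vec n) : lincomb [(a, y)] = vscale a y.
Proof. apply vext; intros i. unfold lincomb, vadd, vscale, vzero; simpl. ring. Qed.

Lemma nonneg_comb_scale {n} (S : vec n -> Prop) a L :
  0 <= a -> nonneg_comb S L -> nonneg_comb S (scale_weights a L).
Proof.
  intros Ha H. apply Forall_map. eapply Forall_impl; [|exact H].
  simpl. intros p [H1 H2]. split; [auto | nra].
Qed.

Lemma nonneg_comb_single {n} (S : vec n -> Prop) a y : S y -> 0 <= a -> nonneg_comb S [(a, y)].
Proof. intros. constructor; [split; assumption | constructor]. Qed.

Lemma exists_min_weight {n} (L : list (R * vec n)) :
  L <> [] -> exists j, (j < length L)%nat /\
    forall j', (j' < length L)%nat -> fst (nth j L wzero) <= fst (nth j' L wzero).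
Proof.
  induction L as [|p L IH]; intros Hne; [congruence|].
  destruct L as [|q L'].
  { exists O. simpl. split; [lia|]. intros j' Hj'. destruct j'; [lra | lia]. }
  destruct IH as [j [Hj Hmin]]; [congruence|].
  destruct (Rle_dec (fst p) (fst (nth j (q :: L') wzero))) as [Hp|Hp].
  - exists O. split; [simpl; lia|]. intros [|j'] Hj'; simpl; [lra|].
    eapply Rle_trans; [exact Hp | apply Hmin; simpl in *; lia].
  - apply Rnot_le_lt in Hp.
    exists (S j). split; [simpl in *; lia|].
    intros [|j'] Hj'; [exact (Rlt_le _ _ Hp) | apply (Hmin j'); simpl in *; lia].
Qed.

Lemma drop_zero_weights {n} (L : list (R * vec n)) :
  Forall (fun p => 0 <= fst p) L ->
  exists L', (forall p, In p L' <-> In p L /\ 0 < fst p) /\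
    coefsum L' = coefsum L /\ lincomb L' = lincomb L.
Proof.
  induction L as [|p L IH]; intros H.
  { exists []. simpl. repeat split; tauto. }
  inversion H as [|? ? Hp HL]; subst.
  destruct (IH HL) as [L' [Hin [Hs Hl]]].
  destruct (Rlt_dec 0 (fst p)) as [Hpos|Hzero].
  - exists (p :: L'). split; [|split].
    + intros q. simpl. rewrite Hin. split; [intros [<-|Hq]; tauto | tauto].
    + unfold coefsum in *. simpl. rewrite Hs. reflexivity.
    + unfold lincomb in *. simpl. rewrite Hl. reflexivity.
  - assert (E : fst p = 0) by lra. exists L'. split; [|split].
    + intros q. simpl. rewrite Hin. split; [tauto|]. intros [[<-|Hq] Hpos]; [lra | tauto].
    + unfold coefsum in *. simpl. rewrite Hs, E. ring.
    + unfold lincomb in *. simpl. rewrite Hl. apply vext. intros i.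
      unfold vadd, vscale. rewrite E. ring.
Qed.

Lemma In_scale_weights {n} a w (p : vec n) L :
  In (w, p) L -> In (a * w, p) (scale_weights a L).
Proof. intros H. exact (in_map (fun q => (a * fst q, snd q)) L (w, p) H). Qed.

Lemma nonneg_comb_mix {n} (S : vec n -> Prop) t L1 L2 :
  0 <= t <= 1 -> nonneg_comb S L1 -> nonneg_comb S L2 -> coefsum L1 = 1 -> coefsum L2 = 1 ->
  let L := scale_weights t L1 ++ scale_weights (1 - t) L2 in
  nonneg_comb S L /\ coefsum L = 1 /\
  lincomb L = vadd (vscale t (lincomb L1)) (vscale (1 - t) (lincomb L2)).
Proof.
  intros Ht HL1 HL2 Hs1 Hs2 L. split; [|split].
  - apply Forall_app. split; apply nonneg_comb_scale; auto; lra.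
  - unfold L. rewrite coefsum_app, !coefsum_scale, Hs1, Hs2. ring.
  - unfold L. rewrite lincomb_app, !lincomb_scale. reflexivity.
Qed.

Lemma conv_points_of_comb {n} K (L : list (R * vec n)) :
  Forall (fun p => K (fst p) /\ 0 <= fst p) L -> coefsum L = 1 ->
  conv K (fun p => In p (map snd L)) (lincomb L).
Proof.
  intros HL Hs. exists L. split; [|split; auto].
  apply Forall_forall. intros p Hp. rewrite Forall_forall in HL.
  split; [apply in_map; auto | apply HL; auto].
Qed.

Section SubfieldCombinations.

Variable F : R -> Prop.
Hypothesis HF : is_subfield F.

(* The weights solve a linear system with coefficients in [F] (the coordinates of the points,
   plus one row of ones); an [F]-solution closer to them than the least weight stays positive. *)
Lemma reweight_in_subfield {n} (L : list (R * vec n)) (c : vec n) :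
  Forall (fun p => 0 < fst p /\ coords_in F (snd p)) L ->
  coefsum L = 1 -> lincomb L = c -> coords_in F c ->
  exists mu : nat -> R,
    Forall (fun p => F (fst p) /\ 0 < fst p) (reweight mu L) /\
    coefsum (reweight mu L) = 1 /\ lincomb (reweight mu L) = c.
Proof.
  intros HL Hs Hc HcF.
  set (k := length L).
  set (a := fun (e : option (Fin.t n)) j =>
              match e with None => 1 | Some i => snd (nth j L wzero) i end).
  set (b := fun (e : option (Fin.t n)) => match e with None => 1 | Some i => c i end).
  set (lam := fun j => fst (nth j L wzero)).
  assert (Hne : L <> []) by (intros ->; unfold coefsum in Hs; simpl in Hs; lra).
  destruct (exists_min_weight L Hne) as [j0 [Hj0 Hmin]].
  assert (HLj : forall j, (j < k)%nat -> 0 < lam j /\ coords_in F (snd (nth j L wzero)))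
    by (intros j Hj; exact (nth_wzero_Forall _ L j HL Hj)).
  destruct (subfield_solutions_dense F HF k _ a b lam) with (eps := lam j0)
    as [mu [Hmu Hmueq]].
  - intros [i|] j; simpl; [|apply (subfield_1 F HF)].
    destruct (Nat.lt_ge_cases j k) as [Hj|Hj]; [apply HLj; auto|].
    rewrite nth_overflow by auto. apply (subfield_0 F HF).
  - intros [i|]; simpl; [apply HcF | apply (subfield_1 F HF)].
  - intros [i|]; simpl.
    + rewrite <- Hc, lincomb_rsum. apply rsum_ext. intros; unfold lam; ring.
    + transitivity (coefsum L); [|exact Hs].
      rewrite coefsum_rsum. apply rsum_ext. intros; unfold lam; ring.
  - apply HLj; auto.
  - exists mu. split; [|split].
    + apply Forall_nth_wzero. rewrite reweight_length. intros j Hj.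
      rewrite reweight_nth by auto. simpl.
      destruct (Hmu j Hj) as [HFmu Hclose]. split; [auto|].
      assert (lam j0 <= lam j) by (apply Hmin; auto).
      apply Rabs_def2 in Hclose. lra.
    + transitivity (rsum k (fun j => a None j * mu j)); [|apply Hmueq].
      rewrite coefsum_rsum, reweight_length. apply rsum_ext. intros j Hj.
      rewrite reweight_nth by auto. simpl. ring.
    + apply vext. intros i.
      transitivity (rsum k (fun j => a (Some i) j * mu j)); [|apply Hmueq].
      rewrite lincomb_rsum, reweight_length. apply rsum_ext. intros j Hj.
      rewrite reweight_nth by auto. simpl. ring.
Qed.

Lemma index_weights_of_comb {n} (L Ly : list (R * vec n)) :
  Forall (fun p => In (snd p) (map snd L) /\ F (fst p) /\ 0 <= fst p) Ly ->
  exists nu : nat -> R,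
    (forall j, (j < length L)%nat -> F (nu j) /\ 0 <= nu j) /\
    rsum (length L) nu = coefsum Ly /\
    forall i, rsum (length L) (fun j => nu j * snd (nth j L wzero) i) = lincomb Ly i.
Proof.
  induction Ly as [|[w p] Ly IH]; intros H.
  - exists (fun _ => 0). split; [|split].
    + intros; split; [apply (subfield_0 F HF) | lra].
    + apply rsum_zero.
    + intros i. rewrite (rsum_ext _ _ (fun _ => 0)) by (intros; ring). apply rsum_zero.
  - inversion H as [|? ? [Hp [Hw Hw0]] HLy]; subst. simpl in Hp, Hw, Hw0.
    destruct (IH HLy) as [nu [Hnu [Hnus Hnul]]].
    destruct (In_nth (map snd L) p vzero Hp) as [j0 [Hj0 Hpj0]].
    rewrite length_map in Hj0.
    change (@vzero n) with (snd (@wzero n)) in Hpj0. rewrite map_nth in Hpj0.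
    exists (fun j => nu j + if Nat.eqb j j0 then w else 0). split; [|split].
    + intros j Hj. destruct (Hnu j Hj).
      destruct (Nat.eqb j j0); (split; [subfield_closure HF | lra]).
    + rewrite rsum_add, rsum_delta, Hnus by auto. unfold coefsum. simpl. ring.
    + intros i.
      rewrite (rsum_ext _ _ (fun j => nu j * snd (nth j L wzero) i
                                     + (if Nat.eqb j j0 then w * p i else 0))).
      * rewrite rsum_add, rsum_delta, Hnul by auto. rewrite !lincomb_coord. simpl. ring.
      * intros j Hj. destruct (Nat.eqb_spec j j0) as [->|]; [rewrite Hpj0|]; ring.
Qed.

(* Every point has weight at least [m] in [c]; subtracting [t = m / 2] times the (aggregated)
   weights of [y] and renormalising by [1 - t] leaves nonnegative weights in [F] for [z]. *)
Lemma relint_of_pos_comb {n} (L : list (R * vec n)) (c : vec n) :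
  Forall (fun p => F (fst p) /\ 0 < fst p) L -> coefsum L = 1 -> lincomb L = c ->
  relint F (conv F (fun p => In p (map snd L))) c.
Proof.
  intros HL Hs Hc. set (k := length L).
  assert (HLj : forall j, (j < k)%nat -> F (fst (nth j L wzero)) /\ 0 < fst (nth j L wzero))
    by (intros j Hj; exact (nth_wzero_Forall _ L j HL Hj)).
  assert (Hpts : forall j, (j < k)%nat -> In (snd (nth j L wzero)) (map snd L))
    by (intros j Hj; apply in_map, nth_In; auto).
  split.
  - rewrite <- Hc. apply conv_points_of_comb; auto.
    eapply Forall_impl; [|exact HL]. simpl. intros p [HFp Hpos]. split; [auto | lra].
  - intros y [Ly [HLy [Hys Hyl]]].
    destruct (index_weights_of_comb L Ly HLy) as [nu [Hnu [Hnus Hnul]]].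
    assert (Hne : L <> []) by (intros E; rewrite E in Hs; unfold coefsum in Hs; simpl in Hs; lra).
    destruct (exists_min_weight L Hne) as [j0 [Hj0 Hmin]].
    destruct (HLj j0 Hj0) as [HFm Hm].
    set (m := fst (nth j0 L wzero)) in *.
    assert (Hm1 : m <= 1).
    { rewrite <- Hs, coefsum_rsum. apply (rsum_term_le _ (fun j => fst (nth j L wzero))); auto.
      intros j Hj. left; apply HLj; auto. }
    assert (Hnu1 : forall j, (j < k)%nat -> nu j <= 1).
    { intros j Hj. rewrite <- Hys, <- Hnus. apply (rsum_term_le _ nu); auto.
      intros; apply Hnu; auto. }
    set (t := m / 2).
    set (mu := fun j => (fst (nth j L wzero) - t * nu j) / (1 - t)).
    exists (lincomb (reweight mu L)), t. split; [|split; [|split; [|split]]].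
    + exists (reweight mu L). split; [|split; auto].
      * apply Forall_nth_wzero. rewrite reweight_length. intros j Hj.
        rewrite reweight_nth by auto. simpl. split; [apply Hpts; auto|].
        destruct (HLj j Hj). destruct (Hnu j Hj).
        assert (m <= fst (nth j L wzero)) by (apply Hmin; auto).
        assert (nu j <= 1) by auto.
        split; [unfold mu, t; subfield_closure HF; lra|].
        unfold mu, t. apply Rmult_le_pos; [nra | left; apply Rinv_0_lt_compat; lra].
      * rewrite coefsum_rsum, reweight_length.
        rewrite (rsum_ext _ _ (fun j => / (1 - t) * fst (nth j L wzero) + (- t / (1 - t)) * nu j)).
        -- rewrite rsum_add, !rsum_scal, Hnus, Hys, <- coefsum_rsum, Hs. field. unfold t; lra.
        -- intros j Hj. rewrite reweight_nth by auto. simpl. unfold mu. field. unfold t; lra.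
    + unfold t. subfield_closure HF.
    + unfold t; lra.
    + unfold t; lra.
    + rewrite <- Hc. apply vext. intros i. unfold vadd, vscale.
      rewrite Hyl, <- Hnul, !lincomb_rsum, reweight_length.
      rewrite <- !rsum_scal, <- rsum_add. apply rsum_ext. intros j Hj.
      rewrite reweight_nth by auto. simpl. unfold mu. field. unfold t; lra.
Qed.

Lemma relint_of_real_comb {n} (Q : vec n -> Prop) (L : list (R * vec n)) (v x : vec n) w :
  (forall p, Q p -> coords_in F p) ->
  nonneg_comb Q L -> coefsum L = 1 -> lincomb L = v -> coords_in F v ->
  In (w, x) L -> 0 < w ->
  exists pts : list (vec n),
    (forall p, In p pts -> Q p) /\ In x pts /\ relint F (conv F (fun p => In p pts)) v.
Proof.
  intros HQ HL Hs Hv HvF Hx Hw.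
  destruct (drop_zero_weights L) as [Lp [Hin [Hps Hpl]]].
  { eapply Forall_impl; [|exact HL]. simpl; tauto. }
  unfold nonneg_comb in HL. rewrite Forall_forall in HL.
  destruct (reweight_in_subfield Lp v) as [mu [Hmu [Hmus Hmul]]];
    [| congruence | congruence | exact HvF |].
  { apply Forall_forall. intros p Hp. apply Hin in Hp as [Hp Hpos].
    split; [auto | apply HQ, HL; auto]. }
  exists (map snd (reweight mu Lp)). rewrite reweight_points. split; [|split].
  - intros p Hp. apply in_map_iff in Hp as [q [<- Hq]]. apply Hin in Hq. apply HL. tauto.
  - change x with (snd (w, x)). apply in_map, Hin. auto.
  - rewrite <- (reweight_points mu Lp). apply relint_of_pos_comb; auto.
Qed.

End SubfieldCombinations.

Lemma allR_subfield : is_subfield allR.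
Proof. repeat split. Qed.

Lemma lf_zero {n} (phi : vec n -> R) : linear_functional phi -> phi vzero = 0.
Proof.
  intros [_ Hscal]. replace (@vzero n) with (vscale 0 (@vzero n)).
  - rewrite Hscal. ring.
  - apply vext. intros i. unfold vscale, vzero. ring.
Qed.

Lemma lf_comb2 {n} (phi : vec n -> R) a x b y : linear_functional phi ->
  phi (vadd (vscale a x) (vscale b y)) = a * phi x + b * phi y.
Proof. intros [Hadd Hscal]. rewrite Hadd, !Hscal. reflexivity. Qed.

Lemma lf_lincomb {n} (phi : vec n -> R) L : linear_functional phi ->
  phi (lincomb L) = fold_right (fun p acc => fst p * phi (snd p) + acc) 0 L.
Proof.
  intros Hphi. induction L as [|p L IH]; simpl; [apply lf_zero; auto|].
  destruct Hphi as [Hadd Hscal]. rewrite Hadd, Hscal, <- IH. reflexivity.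
Qed.

Lemma lf_lincomb_le {n} (phi : vec n -> R) (S : vec n -> Prop) M L :
  linear_functional phi -> (forall p, S p -> phi p <= M) -> nonneg_comb S L ->
  phi (lincomb L) <= coefsum L * M.
Proof.
  intros Hphi HS HL. rewrite lf_lincomb by auto. unfold coefsum.
  induction L as [|p L IH]; simpl; [lra|].
  inversion HL as [|? ? [Hp Hw] HL']; subst.
  assert (fst p * phi (snd p) <= fst p * M) by (apply Rmult_le_compat_l; auto).
  specialize (IH HL'). lra.
Qed.

Lemma lf_lincomb_eq {n} (phi : vec n -> R) (S : vec n -> Prop) M L :
  linear_functional phi -> (forall p, S p -> phi p = M) -> Forall (fun q => S (snd q)) L ->
  phi (lincomb L) = coefsum L * M.
Proof.
  intros Hphi HS HL. rewrite lf_lincomb by auto. unfold coefsum.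
  induction L as [|p L IH]; simpl; [ring|].
  inversion HL; subst. rewrite HS, IH by auto. ring.
Qed.

Lemma conv_le {n} K (phi : vec n -> R) (S : vec n -> Prop) M v :
  linear_functional phi -> (forall p, S p -> phi p <= M) -> conv K S v -> phi v <= M.
Proof.
  intros Hphi HS [L [HL [Hs ->]]]. rewrite <- (Rmult_1_l M), <- Hs.
  apply (lf_lincomb_le phi S); auto.
  eapply Forall_impl; [|exact HL]. simpl; tauto.
Qed.

Lemma conv_eq {n} K (phi : vec n -> R) (S : vec n -> Prop) M v :
  linear_functional phi -> (forall p, S p -> phi p = M) -> conv K S v -> phi v = M.
Proof.
  intros Hphi HS [L [HL [Hs ->]]]. rewrite <- (Rmult_1_l M), <- Hs.
  apply (lf_lincomb_eq phi S); auto.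
  eapply Forall_impl; [|exact HL]. simpl; tauto.
Qed.

Lemma conv_single {n} F (S : vec n -> Prop) u : is_subfield F -> S u -> conv F S u.
Proof.
  intros HF Hu. exists [(1, u)]. split; [|split].
  - constructor; [|constructor]. simpl. split; [auto | split; [apply (subfield_1 F HF) | lra]].
  - apply coefsum_single.
  - rewrite lincomb_single. apply vext. intros i. unfold vscale. ring.
Qed.

Lemma conv_coords {n} F (S : vec n -> Prop) v : is_subfield F ->
  (forall p, S p -> coords_in F p) -> conv F S v -> coords_in F v.
Proof.
  intros HF HS [L [HL [_ ->]]] i. rewrite lincomb_coord.
  induction L as [|p L IH]; simpl; [apply (subfield_0 F HF)|].
  inversion HL as [|? ? [Hp [Hw _]] HL']; subst. subfield_closure HF. apply HS; auto.
Qed.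

Lemma conv_real_iff {n} (S : vec n -> Prop) v :
  conv allR S v <-> exists L, nonneg_comb S L /\ coefsum L = 1 /\ lincomb L = v.
Proof.
  split; intros [L [HL [Hs Hv]]]; exists L; (split; [|split; auto]);
    eapply Forall_impl; try exact HL; simpl; unfold allR; tauto.
Qed.

Lemma conv_real_of_conv {n} F (S : vec n -> Prop) v : conv F S v -> conv allR S v.
Proof.
  intros [L [HL Hv]]. exists L. split; auto.
  eapply Forall_impl; [|exact HL]. unfold allR. simpl; tauto.
Qed.

Lemma conv_real_flatten {n} (S T : vec n -> Prop) L :
  (forall p, S p -> conv allR T p) -> nonneg_comb S L ->
  exists L', nonneg_comb T L' /\ coefsum L' = coefsum L /\ lincomb L' = lincomb L.
Proof.
  intros HST. induction L as [|[w p] L IH]; intros HL.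
  { exists []. repeat split; constructor. }
  inversion HL as [|? ? [Hp Hw] HL']; subst. simpl in Hp, Hw.
  destruct (IH HL') as [L' [HL'T [Hs Hl]]].
  apply HST, conv_real_iff in Hp as [Lp [HLp [Hps Hpl]]].
  exists (scale_weights w Lp ++ L'). split; [|split].
  - apply Forall_app. split; [apply nonneg_comb_scale|]; auto.
  - rewrite coefsum_app, coefsum_scale, Hps, Hs. unfold coefsum. simpl. ring.
  - rewrite lincomb_app, lincomb_scale, Hpl, Hl. reflexivity.
Qed.

Definition positive_max_face {n} (X Y : vec n -> Prop) (phi : vec n -> R) (M : R) : Prop :=
  linear_functional phi /\ 0 < M /\
  (forall x, X x -> phi x <= M) /\ (exists x, X x /\ phi x = M) /\
  (forall x, Y x <-> (X x /\ phi x = M)).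

Lemma pos_weak_face_of_max_face {n} F (X Y : vec n -> Prop) phi M :
  is_subfield F -> subset Y X -> positive_max_face X Y phi M -> pos_weak_face F X Y.
Proof.
  intros HF HYX [Hphi [HM [Hle [_ HY]]]].
  assert (HYM : forall v, conv F Y v -> phi v = M)
    by (intros v; apply conv_eq; auto; intros p Hp; apply HY; auto).
  split; [split; auto|].
  - intros U HUX [v [Hv [_ Hrel]]] u Hu.
    destruct (Hrel u (conv_single F U u HF Hu)) as [z [t [Hz [_ [Ht0 [Ht1 Hvz]]]]]].
    assert (Hzle : phi z <= M) by (apply (conv_le F phi U); auto).
    assert (Hule : phi u <= M) by auto.
    assert (Hsplit := HYM v Hv). rewrite Hvz, lf_comb2 in Hsplit by auto.
    apply HY. split; [auto | nra].
  - intros U HUX [v [Hv [_ Hrel]]].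
    destruct (Hrel vzero (conv_single F _ vzero HF (or_intror eq_refl)))
      as [z [t [Hz [_ [Ht0 [Ht1 Hvz]]]]]].
    assert (Hzle : phi z <= M).
    { apply (conv_le F phi (fun x => U x \/ x = vzero)); auto.
      intros p [Hp | ->]; [auto | rewrite lf_zero; auto; lra]. }
    assert (Hsplit := HYM v Hv). rewrite Hvz, lf_comb2, lf_zero in Hsplit by auto. nra.
Qed.

Definition constraint (n : nat) : Type := ((vec n -> R) * R)%type.

Definition tight_on {n} (Y : vec n -> Prop) (h : constraint n) : Prop :=
  forall y, Y y -> fst h y = snd h.

Definition tight_constraints {n} (Y : vec n -> Prop) (hs : list (constraint n)) :=
  filter (fun h => if excluded_middle_informative (tight_on Y h) then true else false) hs.

Lemma In_tight_constraints {n} (Y : vec n -> Prop) hs h :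
  In h (tight_constraints Y hs) <-> In h hs /\ tight_on Y h.
Proof.
  unfold tight_constraints. rewrite filter_In.
  destruct (excluded_middle_informative (tight_on Y h)); intuition congruence.
Qed.

Definition constraint_sum {n} (T : list (constraint n)) (x : vec n) : R :=
  fold_right (fun h acc => fst h x + acc) 0 T.

Definition bound_sum {n} (T : list (constraint n)) : R :=
  fold_right (fun h acc => snd h + acc) 0 T.

Lemma constraint_sum_linear {n} (T : list (constraint n)) :
  (forall h, In h T -> linear_functional (fst h)) -> linear_functional (constraint_sum T).
Proof.
  induction T as [|h T IH]; intros HT; split; intros; simpl; try ring;
    destruct (HT h (or_introl eq_refl)) as [Hadd Hscal];
    destruct (IH (fun h' Hh' => HT h' (or_intror Hh'))) as [IHadd IHscal].
  - rewrite Hadd, IHadd. ring.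
  - rewrite Hscal, IHscal. ring.
Qed.

Lemma constraint_sum_le {n} (T : list (constraint n)) x :
  (forall h, In h T -> fst h x <= snd h) -> constraint_sum T x <= bound_sum T.
Proof.
  induction T as [|h T IH]; intros HT; simpl; [lra|].
  assert (fst h x <= snd h) by auto with datatypes.
  assert (constraint_sum T x <= bound_sum T) by auto with datatypes. lra.
Qed.

Lemma constraint_sum_eq_all {n} (T : list (constraint n)) x :
  (forall h, In h T -> fst h x <= snd h) -> constraint_sum T x = bound_sum T ->
  forall h, In h T -> fst h x = snd h.
Proof.
  induction T as [|h T IH]; intros HT Heq h' Hh'; [destruct Hh'|]. simpl in Heq.
  assert (fst h x <= snd h) by auto with datatypes.
  assert (constraint_sum T x <= bound_sum T) by (apply constraint_sum_le; auto with datatypes).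
  destruct Hh' as [<-|Hh']; [lra|].
  apply IH; auto with datatypes. lra.
Qed.

Lemma constraint_sum_tight {n} (T : list (constraint n)) x :
  (forall h, In h T -> fst h x = snd h) -> constraint_sum T x = bound_sum T.
Proof.
  induction T as [|h T IH]; intros HT; simpl; [reflexivity|].
  rewrite HT, IH by auto with datatypes. reflexivity.
Qed.

Lemma uniformly_small {A} (l : list A) (P : A -> R -> Prop) :
  (forall a, In a l -> exists d, 0 < d /\ forall e, 0 < e < d -> P a e) ->
  exists d, 0 < d /\ forall e, 0 < e < d -> forall a, In a l -> P a e.
Proof.
  induction l as [|a l IH]; intros H.
  { exists 1. split; [lra | intros e _ a []]. }
  destruct IH as [d1 [Hd1 H1]]; [auto with datatypes|].
  destruct (H a (or_introl eq_refl)) as [d2 [Hd2 H2]].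
  exists (Rmin d1 d2). split; [apply Rmin_glb_lt; auto|].
  intros e [He0 He] b [<-|Hb].
  - apply H2. split; [lra | eapply Rlt_le_trans; [exact He | apply Rmin_r]].
  - apply H1; auto. split; [lra | eapply Rlt_le_trans; [exact He | apply Rmin_l]].
Qed.

(* Averaging points of [Y] that witness the non-tightness of each constraint in turn. *)
Lemma exists_comb_strict_off_tight {n} F (X Y : vec n -> Prop) (hs : list (constraint n)) :
  is_subfield F -> subset Y X ->
  (forall h, In h hs -> linear_functional (fst h) /\ forall x, X x -> fst h x <= snd h) ->
  (exists y, Y y) ->
  exists c, conv F Y c /\ forall h, In h hs -> tight_on Y h \/ fst h c < snd h.
Proof.
  intros HF HYX Hhs [y0 Hy0]. induction hs as [|h hs IH].
  { exists y0. split; [apply conv_single; auto | intros h []]. }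
  destruct IH as [c [Hc Hcl]]; auto with datatypes.
  destruct (Hhs h (or_introl eq_refl)) as [Hlin Hvalid].
  destruct (classic (tight_on Y h)) as [Th|Th].
  { exists c. split; auto. intros h' [<-|Hh']; auto. }
  assert (Hy : exists y, Y y /\ fst h y < snd h).
  { apply NNPP. intros Hno. apply Th. intros y Hy.
    destruct (Rle_lt_or_eq_dec _ _ (Hvalid y (HYX y Hy))) as [Hlt|]; auto.
    exfalso. apply Hno. eauto. }
  destruct Hy as [y [Hy Hhy]].
  exists (vadd (vscale (/2) c) (vscale (/2) y)). split.
  - destruct Hc as [Lc [HLc [HLcs HLcc]]].
    exists (scale_weights (/2) Lc ++ [(/2, y)]). split; [|split].
    + apply Forall_app. split.
      * apply Forall_map. eapply Forall_impl; [|exact HLc]. simpl. intros p [Hp [HFp Hpos]].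
        split; [auto | split; [subfield_closure HF | nra]].
      * constructor; [|constructor]. simpl. split; [auto | split; [subfield_closure HF | lra]].
    + rewrite coefsum_app, coefsum_scale, HLcs, coefsum_single. field.
    + rewrite lincomb_app, lincomb_scale, lincomb_single, HLcc. reflexivity.
  - intros h' Hh'. destruct (Hhs h' Hh') as [Hlin' Hvalid'].
    rewrite lf_comb2 by auto.
    assert (fst h' y <= snd h') by auto.
    assert (fst h' c <= snd h')
      by (apply (conv_le F (fst h') Y); auto; intros p Hp; apply Hvalid'; auto).
    destruct Hh' as [<-|Hh']; [right; lra|].
    destruct (Hcl h' Hh'); [left; auto | right; lra].
Qed.

Lemma pos_weak_face_not_zero {n} F (X Y : vec n -> Prop) :
  is_subfield F -> pos_weak_face F X Y -> ~ Y vzero.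
Proof.
  intros HF [_ Hpos] HY0. apply (Hpos (fun _ => False)); [intros p []|].
  exists vzero. split; [apply conv_single; auto|].
  replace (fun x : vec n => False \/ x = vzero) with (fun p => In p (map snd [(1, @vzero n)])).
  - apply relint_of_pos_comb; auto.
    + constructor; [|constructor]. simpl. split; [subfield_closure HF | lra].
    + apply coefsum_single.
    + rewrite lincomb_single. apply vext. intros i. unfold vscale, vzero. ring.
  - apply set_ext. intros p. simpl. intuition.
Qed.

(* If [0] were among the points it would contradict positivity; otherwise this is the
   weak face property. *)
Lemma pos_weak_face_absorbs {n} F (X Y : vec n -> Prop) (pts : list (vec n)) c :
  pos_weak_face F X Y -> (forall p, In p pts -> X p \/ p = vzero) ->
  conv F Y c -> relint F (conv F (fun p => In p pts)) c -> forall p, In p pts -> Y p.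
Proof.
  intros [[_ Hweak] Hpos] Hpts Hc Hrel.
  destruct (classic (In vzero pts)) as [H0|H0].
  - exfalso. apply (Hpos (fun p => In p pts /\ X p)); [intros p [_ Hp]; auto|].
    exists c. split; auto.
    replace (fun x => (In x pts /\ X x) \/ x = vzero) with (fun p => In p pts); auto.
    apply set_ext. intros p. split.
    + intros Hp. destruct (Hpts p Hp) as [Hx | ->]; auto.
    + intros [[Hp _] | ->]; auto.
  - apply (Hweak (fun p => In p pts)); eauto.
    intros p Hp. destruct (Hpts p Hp) as [Hx | ->]; [auto | contradiction].
Qed.

Section PolyhedralHull.

Variables (n : nat) (F : R -> Prop) (X Y : vec n -> Prop) (hs : list (constraint n)).
Hypothesis HF : is_subfield F.
Hypothesis hXF : forall x, X x -> coords_in F x.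
Hypothesis hs_linear : forall h, In h hs -> linear_functional (fst h).
Hypothesis hs_hull :
  forall v, conv allR (fun x => X x \/ x = vzero) v <-> forall h, In h hs -> fst h v <= snd h.

Lemma hs_valid x : X x \/ x = vzero -> forall h, In h hs -> fst h x <= snd h.
Proof. intros Hx. apply hs_hull, conv_single; [apply allR_subfield | auto]. Qed.

(* Constraints strict at [c] survive a small step, tight ones stay tight along the line. *)
Lemma exists_extension_in_hull c x :
  (forall h, In h hs -> tight_on Y h \/ fst h c < snd h) ->
  (forall h, In h hs -> tight_on Y h -> fst h c = snd h /\ fst h x = snd h) ->
  exists e, 0 < e /\
    conv allR (fun x => X x \/ x = vzero) (vadd (vscale (1 + e) c) (vscale (- e) x)).
Proof.
  intros Hcl Htight.
  destruct (uniformly_small hs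
              (fun h e => fst h (vadd (vscale (1 + e) c) (vscale (- e) x)) <= snd h))
    as [d [Hd Hsmall]].
  { intros h Hh. destruct (Hcl h Hh) as [Th|Hlt].
    - exists 1. split; [lra|]. intros e _.
      destruct (Htight h Hh Th) as [Hc Hx]. rewrite lf_comb2, Hc, Hx by auto. lra.
    - set (A := Rabs (fst h c - fst h x)).
      assert (0 <= A) by apply Rabs_pos.
      assert (fst h c - fst h x <= A) by apply Rle_abs.
      exists ((snd h - fst h c) / (A + 1)). split; [apply Rdiv_lt_0_compat; lra|].
      intros e [He0 He]. rewrite lf_comb2 by auto.
      apply (Rmult_lt_compat_r (A + 1)) in He; [|lra].
      replace ((snd h - fst h c) / (A + 1) * (A + 1)) with (snd h - fst h c) in He by (field; lra).
      nra. }
  exists (d / 2). split; [lra|]. apply hs_hull. intros h Hh. apply Hsmall; auto; lra.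
Qed.

Lemma tight_point_in_face c x :
  pos_weak_face F X Y -> conv F Y c ->
  (forall h, In h hs -> tight_on Y h \/ fst h c < snd h) ->
  X x \/ x = vzero -> (forall h, In h hs -> tight_on Y h -> fst h x = snd h) -> Y x.
Proof.
  intros Hpos Hc Hcl Hx Hxt.
  set (Q := fun p => X p \/ p = vzero).
  assert (HQ : forall p, Q p -> coords_in F p).
  { intros p [Hp | ->] i; [apply hXF; auto | apply (subfield_0 F HF)]. }
  destruct (exists_extension_in_hull c x Hcl) as [e [He Hd]].
  { intros h Hh Th. split; auto. apply (conv_eq F (fst h) Y); auto. }
  apply conv_real_iff in Hd as [Ld [HLd [HLds HLdd]]].
  set (t := / (1 + e)).
  assert (Ht : 0 < t < 1).
  { unfold t. split; [apply Rinv_0_lt_compat; lra|].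
    rewrite <- Rinv_1. apply Rinv_lt_contravar; lra. }
  destruct (nonneg_comb_mix Q t Ld [(1, x)]) as [HL [HLs HLl]];
    [lra | auto | apply nonneg_comb_single; auto; lra | auto | apply coefsum_single |].
  destruct (relint_of_real_comb F HF Q _ c x ((1 - t) * 1) HQ HL HLs)
    as [pts [Hpts [Hxpts Hrel]]].
  - rewrite HLl, HLdd, lincomb_single. apply vext. intros i. unfold vadd, vscale, t.
    field. lra.
  - apply (conv_coords F Y); auto. intros p Hp. apply hXF. apply Hpos; auto.
  - apply in_or_app. right. apply In_scale_weights. left. reflexivity.
  - lra.
  - apply (pos_weak_face_absorbs F X Y pts c); auto.
Qed.

Lemma max_face_of_pos_weak_face :
  pos_weak_face F X Y -> (exists y, Y y) -> exists phi M, positive_max_face X Y phi M.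
Proof.
  intros Hpos [y0 Hy0].
  assert (HYX : subset Y X) by apply Hpos.
  destruct (exists_comb_strict_off_tight F X Y hs HF HYX) as [c [Hc Hcl]]; eauto.
  { intros h Hh. split; auto. intros x Hx. apply hs_valid; auto. }
  set (T := tight_constraints Y hs).
  assert (HT : forall h, In h T <-> In h hs /\ tight_on Y h) by apply In_tight_constraints.
  assert (Hlin : linear_functional (constraint_sum T))
    by (apply constraint_sum_linear; intros h Hh; apply hs_linear, HT, Hh).
  assert (Hle : forall x, X x \/ x = vzero -> constraint_sum T x <= bound_sum T)
    by (intros x Hx; apply constraint_sum_le; intros h Hh; apply hs_valid, HT; auto).
  assert (Hface : forall x, X x \/ x = vzero -> constraint_sum T x = bound_sum T -> Y x).
  { intros x Hx Heq. apply (tight_point_in_face c x); auto.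
    intros h Hh Th. apply (constraint_sum_eq_all T x); auto.
    - intros h' Hh'. apply hs_valid, HT; auto.
    - apply HT; auto. }
  exists (constraint_sum T), (bound_sum T). split; [auto | split; [|split; [|split]]].
  - assert (H0 := Hle vzero (or_intror eq_refl)). rewrite lf_zero in H0 by auto.
    destruct (Rle_lt_or_eq_dec _ _ H0) as [Hlt | Heq]; auto.
    exfalso. apply (pos_weak_face_not_zero F X Y HF Hpos), Hface; auto.
    rewrite lf_zero; auto.
  - intros x Hx. apply Hle; auto.
  - exists y0. split; auto. apply constraint_sum_tight. intros h Hh. apply HT; auto.
  - intros x. split; [intros Hx; split; auto | intros [Hx Heq]; apply Hface; auto].
    apply constraint_sum_tight. intros h Hh. apply HT; auto.
Qed.

End PolyhedralHull.

Lemma max_face_proper {n} (X Y : vec n -> Prop) phi M :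
  conv allR X vzero -> positive_max_face X Y phi M -> ~ (forall x, Y x <-> X x).
Proof.
  intros H0 [Hphi [HM [_ [_ HY]]]] HYX.
  assert (HphiM : phi vzero = M).
  { apply (conv_eq allR phi X); auto. intros p Hp. apply HY, HYX, Hp. }
  rewrite lf_zero in HphiM by auto. lra.
Qed.

Lemma conv_nonempty {n} K (S : vec n -> Prop) v : conv K S v -> exists x, S x.
Proof.
  intros [[|p L] [HL [Hs _]]]; [unfold coefsum in Hs; simpl in Hs; lra|].
  inversion HL as [|? ? [Hp _] _]. eauto.
Qed.

(* Any point [x] of [X] enters a real convex combination for [v] with positive weight: write
   [v = s 0 + (1 - s) z] inside [conv_F (U ∪ {0})], expand [0 = t x + (1 - t) z'] inside
   [conv_R X], and flatten; the weak face property then puts [x] in [Y]. *)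
Lemma pos_weak_face_of_weak_face {n} F (X Y : vec n -> Prop) :
  is_subfield F -> (forall x, X x -> coords_in F x) ->
  relint allR (conv allR X) vzero -> subset Y X ->
  ~ (forall x, Y x <-> X x) -> weak_face F X Y -> pos_weak_face F X Y.
Proof.
  intros HF hXF [H0 H0rel] HYX Hproper Hweak. split; auto.
  intros U HUX [v [Hv [_ Hrel]]]. apply Hproper. intros x. split; [apply HYX | intros Hx].
  destruct (Hrel vzero (conv_single F (fun x => U x \/ x = vzero) vzero HF (or_intror eq_refl)))
    as [z [s [Hz [_ [Hs0 [Hs1 Hvz]]]]]].
  destruct (H0rel x (conv_single allR X x allR_subfield Hx))
    as [z' [t [Hz' [_ [Ht0 [Ht1 H0z]]]]]].
  apply conv_real_of_conv, conv_real_iff in Hz as [Lz [HLz [HLzs HLzl]]].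
  apply conv_real_iff in Hz' as [Lz' [HLz' [HLz's HLz'l]]].
  destruct (conv_real_flatten (fun x => U x \/ x = vzero) X Lz) as [Lw [HLw [HLws HLwl]]]; auto.
  { intros p [Hp | ->]; [apply conv_single; [apply allR_subfield | apply HUX; auto] | auto]. }
  destruct (nonneg_comb_mix X t [(1, x)] Lz') as [HL0 [HL0s HL0l]];
    [lra | apply nonneg_comb_single; auto; lra | auto | apply coefsum_single | auto |].
  set (L0 := scale_weights t [(1, x)] ++ scale_weights (1 - t) Lz') in *.
  destruct (nonneg_comb_mix X s L0 Lw) as [HL [HLs HLl]];
    [lra | exact HL0 | exact HLw | exact HL0s | congruence |].
  destruct (relint_of_real_comb F HF X _ v x (s * (t * 1)) hXF HL HLs)
    as [pts [Hpts [Hxpts Hrelpts]]].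
  - rewrite HLl, HL0l, HLwl, HLzl, lincomb_single, HLz'l, Hvz.
    apply vext. intros i. apply (f_equal (fun w => w i)) in H0z.
    unfold vadd, vscale, vzero in *.
    replace (t * (1 * x i) + (1 - t) * z' i) with 0 by lra. ring.
  - apply (conv_coords F Y v HF); [intros p Hp; apply hXF, HYX, Hp | exact Hv].
  - apply in_or_app. left. apply In_scale_weights, in_or_app. left. apply In_scale_weights.
    left. reflexivity.
  - nra.
  - apply (proj2 Hweak (fun p => In p pts)); eauto.
Qed.

Theorem theorem4p7 (n : nat) (F : R -> Prop) (X : vec n -> Prop)
  (hF : is_subfield F)
  (hXF : forall x, X x -> forall i, F (x i))
  (hpoly : polyhedron (conv allR (fun x => X x \/ x = vzero))) :
  (forall Y : vec n -> Prop, subset Y X -> (exists y, Y y) ->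
     (pos_weak_face F X Y <->
      exists (phi : vec n -> R) (M : R),
        linear_functional phi /\ 0 < M /\
        (forall x, X x -> phi x <= M) /\ (exists x, X x /\ phi x = M) /\
        (forall x, Y x <-> (X x /\ phi x = M))))
  /\
  (relint allR (conv allR X) vzero ->
   forall Y : vec n -> Prop, subset Y X ->
     (pos_weak_face F X Y <->
      (~ (forall x, Y x <-> X x)) /\ weak_face F X Y)).
Proof.
  destruct hpoly as [hs [hs_linear hs_hull]].
  assert (Hmax : forall Y, pos_weak_face F X Y -> (exists y, Y y) ->
                 exists phi M, positive_max_face X Y phi M)
    by (intros Y; apply (max_face_of_pos_weak_face n F X Y hs); auto).
  split.
  - intros Y HYX Hne. split; [intros Hpos; apply Hmax; auto|].
    intros [phi [M Hface]]. apply (pos_weak_face_of_max_face F X Y phi M); auto.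
  - intros H0 Y HYX. split.
    + intros Hpos. split; [|apply Hpos]. intros HYeq.
      destruct (conv_nonempty allR X vzero (proj1 H0)) as [x Hx].
      destruct (Hmax Y Hpos) as [phi [M Hface]]; [exists x; apply HYeq, Hx|].
      exact (max_face_proper X Y phi M (proj1 H0) Hface HYeq).
    + intros [Hproper Hweak]. apply pos_weak_face_of_weak_face; auto.
Qed.
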